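(* Consider the two-slab, three-element (periodic) space-time SBP scheme: unknowns $\boldsymbol\rho^{I},\boldsymbol g^{I}_k,\boldsymbol\rho^{II},\boldsymbol g^{II}_k$ ($k=1,\dots,n_v$) satisfying, for slab I, $$\mathsf D_t\boldsymbol\rho^{I}+\tilde{\mathsf D}_x\langle v\boldsymbol g^{I}\rangle=-\sigma_a\boldsymbol\rho^{I}-\mathsf H_t^{-1}\mathsf t_B\mathsf t_B^\top(\boldsymbol\rho^{I}-\boldsymbol\rho^{I}(0)),$$ $$\mathsf D_t\boldsymbol g^{I}_k+\tfrac{v_k}{\varepsilon}\tilde{\mathsf D}_x\boldsymbol g^{I}_k-\tfrac1\varepsilon\langle v\tilde{\mathsf D}_x\boldsymbol g^{I}\rangle+\tfrac{v_k}{\varepsilon^2}\tilde{\mathsf D}_x\boldsymbol\rho^{I}=-\Big(\tfrac{\sigma_s}{\varepsilon^2}+\sigma_a\Big)\boldsymbol g^{I}_k-\mathsf H_t^{-1}\mathsf t_B\mathsf t_B^\top(\boldsymbol g^{I}_k-\boldsymbol g^{I}_k(0)),$$ and for slab II the same equations with superscript $II$ and with the initial SAT terms replaced by $-\mathsf H_t^{-1}\mathsf t_B(\mathsf t_B^\top\boldsymbol\rho^{II}-\mathsf t_T^\top\boldsymbol\rho^{I})$ and $-\mathsf H_t^{-1}\mathsf t_B(\mathsf t_B^\top\boldsymbol g^{II}_k-\mathsf t_T^\top\boldsymbol g^{I}_k)$; the initial data satisfy $\langle\boldsymbol g^{I}(0)\rangle=0$. Then the scheme is stable: with $M_T=\bar{\boldsymbol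 t}_T\bar{\boldsymbol t}_T^\top\otimes\mathsf I_3\otimes\bar{\mathsf H}_x$ and $M_B=\bar{\boldsymbol t}_B\bar{\boldsymbol t}_B^\top\otimes\mathsf I_3\otimes\bar{\mathsf H}_x$, every solution satisfies $$\tfrac12(\boldsymbol\rho^{II})^\top M_T\boldsymbol\rho^{II}+\tfrac{\varepsilon^2}2\langle(\boldsymbol g^{II})^\top M_T\boldsymbol g^{II}\rangle\le\tfrac12\boldsymbol\rho^{I}(0)^\top M_B\boldsymbol\rho^{I}(0)+\tfrac{\varepsilon^2}2\langle\boldsymbol g^{I}(0)^\top M_B\boldsymbol g^{I}(0)\rangle.$$
   Context: SBP operators: $\bar{\mathsf D}=\bar{\mathsf H}^{-1}\bar{\mathsf Q}$ on nodes $x_0<\dots<x_n$ is a degree-$p$ SBP approximation of $d/dx$ if $\bar{\mathsf D}\boldsymbol x^k=k\boldsymbol x^{k-1}$ for $0\le k\le p$, $\bar{\mathsf H}$ is diagonal symmetric positive definite, and $\bar{\mathsf Q}+\bar{\mathsf Q}^\top=\bar{\mathsf E}=\bar{\boldsymbol t}_R\bar{\boldsymbol t}_R^\top-\bar{\boldsymbol t}_L\bar{\boldsymbol t}_L^\top=\mathrm{diag}(-1,0,\dots,0,1)$, $\bar{\boldsymbol t}_L,\bar{\boldsymbol t}_R$ first/last unit vectors. $\bar{\mathsf D}_x=\bar{\mathsf H}_x^{-1}\bar{\mathsf Q}_x$ on $n_x+1$ spatial nodes per element, $\bar{\mathsf S}_x=\bar{\mathsf Q}_x-\frac12\bar{\mathsf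 E}_x$; $\bar{\mathsf D}_t=\bar{\mathsf H}_t^{-1}\bar{\mathsf Q}_t$ on $n_t+1$ temporal nodes per slab, with first/last unit vectors $\bar{\boldsymbol t}_B,\bar{\boldsymbol t}_T$. $\tilde{\bar{\mathsf D}}^G_x=(\mathsf I_3\otimes\bar{\mathsf H}_x^{-1})\tilde{\bar{\mathsf Q}}^G_x$, with $\tilde{\bar{\mathsf Q}}^G_x$ the $3\times3$ block matrix with diagonal blocks $\bar{\mathsf S}_x$, blocks $(1,2),(2,3),(3,1)$ equal to $\frac12\bar{\boldsymbol t}_R\bar{\boldsymbol t}_L^\top$, blocks $(2,1),(3,2),(1,3)$ equal to $-\frac12\bar{\boldsymbol t}_L\bar{\boldsymbol t}_R^\top$. With identities $\mathsf I_{n_x},\mathsf I_{n_t}$ of sizes $n_x+1,n_t+1$: $\tilde{\mathsf D}_x=\mathsf I_{n_t}\otimes\tilde{\bar{\mathsf D}}^G_x$, $\mathsf D_t=\bar{\mathsf D}_t\otimes\mathsf I_3\otimes\mathsf I_{n_x}$, $\mathsf H_t=\bar{\mathsf H}_t\otimes\mathsf I_3\otimes\mathsf I_{n_x}$, $\mathsf t_B=\bar{\boldsymbol t}_B\otimes\mathsf I_3\otimes\mathsf I_{n_x}$, $\mathsf t_T=\bar{\boldsymbol t}_T\otimes\mathsf I_3\otimes\mathsf I_{n_x}$. Velocity nodes $v_k$, weights $\omega_k$ with $\sum\omega_k=1$, $\sum\omega_kv_k=0$; $\langle\boldsymbol a\rangle=\sum_k\omega_k\boldsymbol a_k$. $\varepsilon>0$,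 $\sigma_s>0$, $\sigma_a\ge0$; $\boldsymbol\rho^{I}(0),\boldsymbol g^{I}_k(0)$ given initial-data vectors. *)

(* Kronecker product: tensmx from mathcomp-real-closed mxtens
   (standard row-major Kronecker product: (A ⊗ B)[i*p+j, k*q+l] = A[i,k] B[j,l]). *)
From HB Require Import structures.
From mathcomp Require Import all_boot all_order all_algebra.
From mathcomp Require Import mxtens.
Set Implicit Arguments. Unset Strict Implicit. Unset Printing Implicit Defensive.
Import Order.TTheory GRing.Theory Num.Theory.
Local Open Scope ring_scope.

Section SBPDefs.
Variable R : realFieldType.

Definition tL {n : nat} : 'cV[R]_n.+1 := delta_mx ord0 0.
Definition tR {n : nat} : 'cV[R]_n.+1 := delta_mx ord_max 0.

Definition Ebar {n : nat} : 'M[R]_n.+1 := tR *m tR^T - tL *m tL^T.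

Definition xpow {n : nat} (x : 'cV[R]_n) (k : nat) : 'cV[R]_n :=
  map_mx (fun a => a ^+ k) x.

Definition is_SBP {n : nat} (p : nat) (x : 'cV[R]_n.+1) (H Q : 'M[R]_n.+1) : Prop :=
  (forall i j : 'I_n.+1, (i < j)%N -> x i 0 < x j 0) /\
  is_diag_mx H /\ H^T = H /\ (forall i, 0 < H i i) /\
  Q + Q^T = Ebar /\
  (forall k, (k <= p)%N -> (invmx H *m Q) *m xpow x k = k%:R *: xpow x k.-1).

Definition Pcyc : 'M[R]_3 :=
  \matrix_(a < 3, b < 3) (if (b == (a.+1 %% 3)%N :> nat) then 1 else 0).

(* Q~^G_x : diagonal blocks S_x, blocks (1,2),(2,3),(3,1) = 1/2 t_R t_L^T,
   blocks (2,1),(3,2),(1,3) = -1/2 t_L t_R^T (1-indexed) *)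
Definition QGx {nx : nat} (Qx : 'M[R]_nx.+1) : 'M[R]_(3 * nx.+1) :=
  tensmx (1%:M : 'M[R]_3) (Qx - 2^-1 *: Ebar)
  + tensmx Pcyc (2^-1 *: (tR *m tL^T))
  - tensmx Pcyc^T (2^-1 *: (tL *m tR^T)).

Definition DGx {nx : nat} (Hx Qx : 'M[R]_nx.+1) : 'M[R]_(3 * nx.+1) :=
  tensmx (1%:M : 'M[R]_3) (invmx Hx) *m QGx Qx.

Definition Dx_glob {nt nx : nat} (Hx Qx : 'M[R]_nx.+1) : 'M[R]_(nt.+1 * (3 * nx.+1)) :=
  tensmx (1%:M : 'M[R]_nt.+1) (DGx Hx Qx).
Definition Dt_glob {nt nx : nat} (Ht Qt : 'M[R]_nt.+1) : 'M[R]_(nt.+1 * (3 * nx.+1)) :=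
  tensmx (invmx Ht *m Qt) (1%:M : 'M[R]_(3 * nx.+1)).
Definition Ht_glob {nt nx : nat} (Ht : 'M[R]_nt.+1) : 'M[R]_(nt.+1 * (3 * nx.+1)) :=
  tensmx Ht (1%:M : 'M[R]_(3 * nx.+1)).
Definition tB_glob {nt nx : nat} : 'M[R]_(nt.+1 * (3 * nx.+1), 1 * (3 * nx.+1)) :=
  tensmx (tL : 'cV[R]_nt.+1) (1%:M : 'M[R]_(3 * nx.+1)).
Definition tT_glob {nt nx : nat} : 'M[R]_(nt.+1 * (3 * nx.+1), 1 * (3 * nx.+1)) :=
  tensmx (tR : 'cV[R]_nt.+1) (1%:M : 'M[R]_(3 * nx.+1)).
Definition MT {nt nx : nat} (Hx : 'M[R]_nx.+1) : 'M[R]_(nt.+1 * (3 * nx.+1)) :=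
  tensmx ((tR : 'cV[R]_nt.+1) *m tR^T) (tensmx (1%:M : 'M[R]_3) Hx).
Definition MB {nt nx : nat} (Hx : 'M[R]_nx.+1) : 'M[R]_(nt.+1 * (3 * nx.+1)) :=
  tensmx ((tL : 'cV[R]_nt.+1) *m tL^T) (tensmx (1%:M : 'M[R]_3) Hx).

Definition qform {N : nat} (M : 'M[R]_N) (a : 'cV[R]_N) : R := (a^T *m M *m a) 0 0.

Definition vavg {nv N : nat} (w : 'I_nv -> R) (a : 'I_nv -> 'cV[R]_N) : 'cV[R]_N :=
  \sum_(k < nv) w k *: a k.
Definition savg {nv : nat} (w : 'I_nv -> R) (a : 'I_nv -> R) : R :=
  \sum_(k < nv) w k * a k.

End SBPDefs.

(* Energy method, one slab at a time.  Test each equation of a slab against its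
   solution in the norm P = H_t (x) I_3 (x) H_x.  The SBP property of D_t turns the time
   derivative into the energy at the top of the slab minus the energy at the bottom,
   the periodic coupling makes P D_x skew, and the SAT term completes the square at the
   bottom, leaving only the incoming energy; scattering and absorption only dissipate.
   The velocity average <g> satisfies a damped SAT problem with zero data (the fluxes
   cancel since <v> = 0), so it vanishes; then, after weighting the kinetic estimates
   by eps^2 and averaging, their flux terms cancel the macroscopic one by skew-symmetry.
   Slab II is fed the outgoing traces of slab I, so the two estimates chain. *)

From HB Require Import structures.
From mathcomp Require Import all_boot all_order all_algebra.
From mathcomp Require Import mxtens.
From mathcomp Require Import ring lra.
From Corelib Require Import Setoid.
Set Implicit Arguments. Unset Strict Implicit. Unset Printing Implicit Defensive.
Import Order.TTheory GRing.Theory Num.Theory.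
Local Open Scope ring_scope.

Section Dot.
Variable R : comPzRingType.

Definition dot {N : nat} (x y : 'cV[R]_N) : R := (x^T *m y) 0 0.

Lemma dotC N (x y : 'cV[R]_N) : dot x y = dot y x.
Proof. by rewrite /dot -[x^T *m y]trmxK trmx_mul trmxK mxE. Qed.

Lemma dotDr N (x y z : 'cV[R]_N) : dot x (y + z) = dot x y + dot x z.
Proof. by rewrite /dot mulmxDr mxE. Qed.

Lemma dotNr N (x y : 'cV[R]_N) : dot x (- y) = - dot x y.
Proof. by rewrite /dot mulmxN mxE. Qed.

Lemma dotBr N (x y z : 'cV[R]_N) : dot x (y - z) = dot x y - dot x z.
Proof. by rewrite dotDr dotNr. Qed.

Lemma dotZr N a (x y : 'cV[R]_N) : dot x (a *: y) = a * dot x y.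
Proof. by rewrite /dot -scalemxAr mxE. Qed.

Lemma dot0r N (x : 'cV[R]_N) : dot x 0 = 0.
Proof. by rewrite /dot mulmx0 mxE. Qed.

Lemma dotBl N (x y z : 'cV[R]_N) : dot (x - y) z = dot x z - dot y z.
Proof. by rewrite dotC dotBr !(dotC _ z). Qed.

Lemma dotZl N a (x y : 'cV[R]_N) : dot (a *: x) y = a * dot x y.
Proof. by rewrite dotC dotZr dotC. Qed.

Lemma dot_suml N I (r : seq I) (P : pred I) (f : I -> 'cV[R]_N) z :
  dot (\sum_(i <- r | P i) f i) z = \sum_(i <- r | P i) dot (f i) z.
Proof. by rewrite /dot linear_sum /= mulmx_suml summxE. Qed.

Lemma dot_mulmxr N M (x : 'cV[R]_N) (A : 'M[R]_(N, M)) y :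
  dot x (A *m y) = dot (A^T *m x) y.
Proof. by rewrite /dot trmx_mul trmxK mulmxA. Qed.

Lemma dot_skew N (S : 'M[R]_N) x y : S^T = - S -> dot x (S *m y) = - dot y (S *m x).
Proof. by move=> skS; rewrite dot_mulmxr skS mulNmx dotC dotNr. Qed.

End Dot.

Section Velocity_average.
Variables (R : realFieldType) (nv N : nat) (w : 'I_nv -> R).
Implicit Types (f g : 'I_nv -> 'cV[R]_N) (a b : 'I_nv -> R).

Lemma eq_vavg f g : (forall k, f k = g k) -> vavg w f = vavg w g.
Proof. by move=> fg; apply: eq_bigr => k _; rewrite fg. Qed.

Lemma vavgD f g : vavg w (fun k => f k + g k) = vavg w f + vavg w g.
Proof. by rewrite /vavg -big_split; apply: eq_bigr => k _; rewrite scalerDr. Qed.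

Lemma vavgN f : vavg w (fun k => - f k) = - vavg w f.
Proof. by rewrite /vavg -sumrN; apply: eq_bigr => k _; rewrite scalerN. Qed.

Lemma vavgZ c f : vavg w (fun k => c *: f k) = c *: vavg w f.
Proof. by rewrite /vavg scaler_sumr; apply: eq_bigr => k _; rewrite !scalerA mulrC. Qed.

Lemma vavgZ_mulr a c f :
  vavg w (fun k => (a k * c) *: f k) = c *: vavg w (fun k => a k *: f k).
Proof. by rewrite -vavgZ; apply: eq_vavg => k; rewrite mulrC scalerA. Qed.

Lemma vavg_scalel a (x : 'cV[R]_N) : vavg w (fun k => a k *: x) = savg w a *: x.
Proof. by rewrite /vavg /savg scaler_suml; apply: eq_bigr => k _; rewrite scalerA. Qed.

Lemma vavg_const (x : 'cV[R]_N) : vavg w (fun=> x) = (\sum_k w k) *: x.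
Proof. by rewrite /vavg scaler_suml. Qed.

Lemma vavg_mulmx M (A : 'M[R]_(M, N)) f : vavg w (fun k => A *m f k) = A *m vavg w f.
Proof. by rewrite /vavg mulmx_sumr; apply: eq_bigr => k _; rewrite scalemxAr. Qed.

Lemma dot_vavgl f z : dot (vavg w f) z = savg w (fun k => dot (f k) z).
Proof. by rewrite dot_suml; apply: eq_bigr => k _; rewrite dotZl. Qed.

Lemma eq_savg a b : (forall k, a k = b k) -> savg w a = savg w b.
Proof. by move=> ab; apply: eq_bigr => k _; rewrite ab. Qed.

Lemma savgB a b : savg w (fun k => a k - b k) = savg w a - savg w b.
Proof. by rewrite /savg -sumrB; apply: eq_bigr => k _; rewrite mulrBr. Qed.

Lemma savgMl c a : savg w (fun k => c * a k) = c * savg w a.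
Proof. by rewrite /savg mulr_sumr; apply: eq_bigr => k _; rewrite mulrCA. Qed.

Lemma ler_savg a b : (forall k, 0 <= w k) -> (forall k, a k <= b k) -> savg w a <= savg w b.
Proof. by move=> w_ge0 ab; apply: ler_sum => k _; rewrite ler_wpM2l. Qed.

End Velocity_average.

Section Positivity.
Variable R : realFieldType.

Lemma qformE N (A : 'M[R]_N) x : qform A x = dot x (A *m x).
Proof. by rewrite /qform /dot mulmxA. Qed.

Lemma qform_sandwich N M (T : 'M[R]_(N, M)) (K : 'M[R]_M) x :
  qform (T *m K *m T^T) x = qform K (T^T *m x).
Proof. by rewrite !qformE -!mulmxA dot_mulmxr. Qed.

Lemma dot_skew_self N (S : 'M[R]_N) x : S^T = - S -> dot x (S *m x) = 0.
Proof. by move=> /(dot_skew x x); lra. Qed.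

Lemma dot_sym_part N (A : 'M[R]_N) x : dot x (A *m x) = 2^-1 * dot x ((A + A^T) *m x).
Proof. by rewrite mulmxDl dotDr [dot x (A^T *m x)]dot_mulmxr trmxK dotC; field. Qed.

Definition posdef N (A : 'M[R]_N) := forall x, x != 0 -> 0 < qform A x.

Lemma posdef_ge0 N (A : 'M[R]_N) x : posdef A -> 0 <= qform A x.
Proof.
move=> posA; have [->|/posA/ltW//] := eqVneq x 0.
by rewrite qformE mulmx0 dot0r.
Qed.

Lemma posdef_eq0 N (A : 'M[R]_N) x : posdef A -> qform A x <= 0 -> x = 0.
Proof. by move=> posA le0; apply/eqP; apply: contraTT le0 => /posA; rewrite -ltNge. Qed.

Definition pos_diag_mx N (D : 'M[R]_N) := is_diag_mx D /\ forall i, 0 < D i i.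

Lemma qform_diag N (D : 'M[R]_N) x : is_diag_mx D -> qform D x = \sum_i D i i * x i 0 ^+ 2.
Proof.
move=> /is_diag_mxP Ddiag; rewrite qformE /dot mxE; apply: eq_bigr => i _.
rewrite !mxE (bigD1 i) //= big1 ?addr0 => [|j /negbTE ji]; last first.
  by rewrite Ddiag ?mul0r // val_eqE eq_sym ji.
by rewrite mulrCA mulrA.
Qed.

Lemma pos_diag_mx_posdef N (D : 'M[R]_N) : pos_diag_mx D -> posdef D.
Proof.
move=> [Ddiag D_gt0] x; apply: contraNT; rewrite -leNgt qform_diag // => le0.
have term_ge0 i : 0 <= D i i * x i 0 ^+ 2 by rewrite mulr_ge0 ?sqr_ge0 ?ltW.
have/psumr_eq0P eq0 : \sum_i D i i * x i 0 ^+ 2 = 0.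
  by apply/le_anti; rewrite le0 sumr_ge0.
apply/eqP/matrixP => i j; rewrite [j]ord1 mxE.
move: (eq0 (fun i _ => term_ge0 i) i isT) => /eqP.
by rewrite mulf_eq0 gt_eqF //= sqrf_eq0 => /eqP.
Qed.

Lemma pos_diag_mx_sym N (D : 'M[R]_N) : pos_diag_mx D -> D^T = D.
Proof.
move=> [/is_diag_mxP Ddiag _]; apply/matrixP => i j; rewrite mxE.
have [->|ij] := eqVneq i j => //.
by rewrite !Ddiag // val_eqE // eq_sym.
Qed.

Lemma pos_diag_mx_unit N (D : 'M[R]_N) : pos_diag_mx D -> D \in unitmx.
Proof.
move=> [Ddiag D_gt0]; rewrite unitmxE det_trig ?is_diag_mx_is_trig //.
by rewrite unitfE; apply/prodf_neq0 => i _; rewrite gt_eqF.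
Qed.

Lemma pos_diag_mx1 N : pos_diag_mx (1%:M : 'M[R]_N).
Proof. by split=> [|i]; rewrite ?scalar_mx_is_diag // mxE eqxx ltr01. Qed.

Lemma pos_diag_mx_tens m n (A : 'M[R]_m) (B : 'M[R]_n) :
  pos_diag_mx A -> pos_diag_mx B -> pos_diag_mx (A *t B).
Proof.
move=> [/is_diag_mxP Adiag A_gt0] [/is_diag_mxP Bdiag B_gt0]; split; last first.
  by move=> i; case: (mxtens_indexP i) => i1 i2; rewrite tensmxE mulr_gt0.
apply/is_diag_mxP => i j; case: (mxtens_indexP i) => i1 i2; case: (mxtens_indexP j) => j1 j2.
rewrite val_eqE (inj_eq (can_inj (@mxtens_indexK m n))) xpair_eqE negb_and tensmxE.
case/orP => ne; first by rewrite Adiag ?mul0r // val_eqE.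
by rewrite Bdiag ?mulr0 // val_eqE.
Qed.

Lemma SBP_pos_diag_mx n p (x : 'cV[R]_n.+1) H Q : is_SBP p x H Q -> pos_diag_mx H.
Proof. by case=> _ [Hdiag [_ [H_gt0 _]]]. Qed.

End Positivity.

Section Energy_estimate.
Variables (R : realFieldType) (N M nv : nat).
Variables (P Dt Dx Hi : 'M[R]_N) (tB tT : 'M[R]_(N, M)) (K : 'M[R]_M).
Hypotheses (P_posdef : posdef P) (K_posdef : posdef K) (K_sym : K^T = K).
Hypothesis Dt_SBP : P *m Dt + (P *m Dt)^T = tT *m K *m tT^T - tB *m K *m tB^T.
Hypothesis Dx_skew : (P *m Dx)^T = - (P *m Dx).
Hypothesis Hi_SAT : P *m Hi *m tB = tB *m K.

(* The SAT term completes the square |tB^T u - b|_K^2 >= 0. *)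
Lemma sat_energy_ge u b :
  2^-1 * (qform K (tT^T *m u) - qform K b)
    <= dot u (P *m (Dt *m u)) + dot u (P *m (Hi *m tB *m (tB^T *m u - b))).
Proof.
have -> : dot u (P *m (Dt *m u))
    = 2^-1 * (qform K (tT^T *m u) - qform K (tB^T *m u)).
  by rewrite mulmxA dot_sym_part Dt_SBP mulmxBl dotBr -!qformE !qform_sandwich.
have -> : dot u (P *m (Hi *m tB *m (tB^T *m u - b)))
    = dot (tB^T *m u) (K *m (tB^T *m u - b)).
  by rewrite !mulmxA Hi_SAT -mulmxA dot_mulmxr.
have cross : dot (tB^T *m u) (K *m b) = dot b (K *m (tB^T *m u)).
  by rewrite dot_mulmxr K_sym dotC.
have := posdef_ge0 (tB^T *m u - b) K_posdef.
rewrite !qformE mulmxBr !(dotBr, dotBl) cross; lra.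
Qed.

Variables (v w : 'I_nv -> R) (eps sigs siga : R).
Hypotheses (w_gt0 : forall k, 0 < w k) (w_sum1 : \sum_(k < nv) w k = 1)
  (wv_sum0 : \sum_(k < nv) w k * v k = 0).
Hypotheses (eps_gt0 : 0 < eps) (sigs_gt0 : 0 < sigs) (siga_ge0 : 0 <= siga).
Variables (rho : 'cV[R]_N) (g : 'I_nv -> 'cV[R]_N).
Variables (brho : 'cV[R]_M) (bg : 'I_nv -> 'cV[R]_M).

Hypothesis Erho : Dt *m rho + Dx *m vavg w (fun k => v k *: g k)
    = - (siga *: rho) - Hi *m tB *m (tB^T *m rho - brho).
Hypothesis Eg : forall k, Dt *m g k + (v k / eps) *: (Dx *m g k)
       - eps^-1 *: vavg w (fun j => v j *: (Dx *m g j))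
       + (v k / eps ^+ 2) *: (Dx *m rho)
     = - ((sigs / eps ^+ 2 + siga) *: g k)
       - Hi *m tB *m (tB^T *m g k - bg k).

Let c := sigs / eps ^+ 2 + siga.
Let G := vavg w (fun k => v k *: g k).

Fact c_gt0 : 0 < c.
Proof. by rewrite ltr_wpDr // divr_gt0 // exprn_gt0. Qed.

Lemma flux_avgE : vavg w (fun j => v j *: (Dx *m g j)) = Dx *m G.
Proof. by rewrite -vavg_mulmx; apply: eq_vavg => j; rewrite scalemxAr. Qed.

(* The streaming terms average to Dx G - Dx G, and the rho coupling to <v> = 0. *)
Lemma avg_kinetic_eq :
  Dt *m vavg w g = - (c *: vavg w g) - Hi *m tB *m (tB^T *m vavg w g - vavg w bg).
Proof.
have := eq_vavg w Eg.
rewrite !(vavgD, vavgN, vavgZ, vavgZ_mulr, vavg_mulmx) vavg_scalel vavg_const.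
by rewrite w_sum1 [savg w v]wv_sum0 scale1r scale0r scaler0 addr0 addrK.
Qed.

Lemma vavg_g_eq0 : vavg w bg = 0 -> vavg w g = 0.
Proof.
move=> bg0; set q := vavg w g.
have := sat_energy_ge q 0; rewrite subr0.
have := congr1 (fun z => dot q (P *m z)) avg_kinetic_eq.
rewrite /= -/q bg0 subr0 mulmxBr mulmxN dotBr dotNr -scalemxAr dotZr => ->.
have := posdef_ge0 (tT^T *m q) K_posdef.
rewrite [qform K 0]qformE mulmx0 dot0r -qformE => tT_ge0 le.
apply: posdef_eq0 P_posdef _; rewrite -(pmulr_rle0 _ c_gt0); lra.
Qed.

Lemma macro_energy_ge :
  2^-1 * (qform K (tT^T *m rho) - qform K brho) <= - dot rho (P *m Dx *m G).
Proof.
have := sat_energy_ge rho brho.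
have := congr1 (fun z => dot rho (P *m z)) Erho.
rewrite /= mulmxDr mulmxBr mulmxN dotDr dotBr dotNr -scalemxAr dotZr.
rewrite [P *m (Dx *m _)]mulmxA -/G => E.
have := mulr_ge0 siga_ge0 (posdef_ge0 rho P_posdef); rewrite qformE; lra.
Qed.

Lemma micro_energy_ge k :
  2^-1 * (qform K (tT^T *m g k) - qform K (bg k))
    <= eps^-1 * dot (g k) (P *m Dx *m G)
       - (eps ^+ 2)^-1 * (v k * dot (g k) (P *m Dx *m rho)).
Proof.
have := sat_energy_ge (g k) (bg k).
have := congr1 (fun z => dot (g k) (P *m z)) (Eg k).
rewrite /= flux_avgE !(mulmxDr, mulmxBr, mulmxN) !(dotDr, dotBr, dotNr).
rewrite -!scalemxAr !dotZr !mulmxA -/G (dot_skew_self _ Dx_skew) => E.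
have := mulr_ge0 (ltW c_gt0) (posdef_ge0 (g k) P_posdef); rewrite qformE /c; lra.
Qed.

Lemma slab_energy : vavg w bg = 0 ->
  vavg w g = 0 /\
  2^-1 * qform K (tT^T *m rho) + eps ^+ 2 / 2 * savg w (fun k => qform K (tT^T *m g k))
    <= 2^-1 * qform K brho + eps ^+ 2 / 2 * savg w (fun k => qform K (bg k)).
Proof.
move=> /vavg_g_eq0 g_avg0; split=> //.
have micro := ler_savg (fun k => ltW (w_gt0 k)) micro_energy_ge.
have flux_rho : savg w (fun k => v k * dot (g k) (P *m Dx *m rho))
    = - dot rho (P *m Dx *m G).
  by rewrite -(dot_skew _ _ Dx_skew) dot_vavgl; apply: eq_bigr => k _; rewrite dotZl.
rewrite savgMl !savgB !savgMl flux_rho -dot_vavgl g_avg0 dotC dot0r in micro.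
rewrite mulr0 sub0r mulrN opprK ler_pdivlMl ?exprn_gt0 // in micro.
have := macro_energy_ge; lra.
Qed.

End Energy_estimate.

Section Tensor.
Variable R : pzRingType.

Lemma tensmxDl m n p q (A B : 'M[R]_(m, n)) (C : 'M[R]_(p, q)) :
  (A + B) *t C = A *t C + B *t C.
Proof. by apply/matrixP => i j; rewrite !mxE mulrDl. Qed.

Lemma tensmxNl m n p q (A : 'M[R]_(m, n)) (C : 'M[R]_(p, q)) : (- A) *t C = - (A *t C).
Proof. by apply/matrixP => i j; rewrite !mxE mulNr. Qed.

Lemma tensmxNr m n p q (A : 'M[R]_(m, n)) (C : 'M[R]_(p, q)) : A *t (- C) = - (A *t C).
Proof. by apply/matrixP => i j; rewrite !mxE mulrN. Qed.

Lemma tensmxBl m n p q (A B : 'M[R]_(m, n)) (C : 'M[R]_(p, q)) :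
  (A - B) *t C = A *t C - B *t C.
Proof. by rewrite tensmxDl tensmxNl. Qed.

Lemma tensmx11 m n : (1%:M : 'M[R]_m) *t (1%:M : 'M[R]_n) = 1%:M.
Proof.
apply/matrixP => i j.
case: (mxtens_indexP i) => i1 i2; case: (mxtens_indexP j) => j1 j2.
rewrite tensmxE !mxE (inj_eq (can_inj (@mxtens_indexK m n))) xpair_eqE.
by case: (i1 == j1); case: (i2 == j2); rewrite ?mulr1 ?mulr0 ?mul0r.
Qed.

End Tensor.

Section SBP_operators.
Variable R : realFieldType.

Lemma SBP_Q_boundary n p (x : 'cV[R]_n.+1) H Q : is_SBP p x H Q -> Q + Q^T = Ebar R.
Proof. by case=> _ [_ [_ [_ []]]]. Qed.

Lemma Ebar_sym n : (Ebar R)^T = Ebar R :> 'M_n.+1.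
Proof. by rewrite /Ebar linearB /= !trmx_mul !trmxK. Qed.

Lemma QGx_skew nx (Qx : 'M[R]_nx.+1) : Qx + Qx^T = Ebar R -> (QGx Qx)^T = - QGx Qx.
Proof.
move=> Qx_E; rewrite /QGx.
set Sx := Qx - _; set X := 2^-1 *: (tR R *m _); set Y := 2^-1 *: (tL R *m _).
have Sx_skew : Sx^T = - Sx.
  apply/matrixP => i j; move/matrixP/(_ i j): Qx_E; move/matrixP/(_ i j): (Ebar_sym nx).
  by rewrite !mxE; lra.
have XY : X^T = Y by rewrite linearZ /= trmx_mul trmxK.
have YX : Y^T = X by rewrite -XY trmxK.
rewrite !linearD /= !linearN /= !trmx_tens Sx_skew XY YX trmx1 trmxK tensmxNr.
by rewrite opprK addrAC.
Qed.

End SBP_operators.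

Section Global_operators.
Variables (R : realFieldType) (nt nx : nat) (Ht Qt : 'M[R]_nt.+1) (Hx Qx : 'M[R]_nx.+1).
Hypotheses (Ht_pos : pos_diag_mx Ht) (Hx_pos : pos_diag_mx Hx).
Hypotheses (Qt_E : Qt + Qt^T = Ebar R) (Qx_E : Qx + Qx^T = Ebar R).

Local Notation Kx := (1%:M *t Hx : 'M[R]_(3 * nx.+1)).
Local Notation P := (Ht *t Kx).
(* The boundary norm, seen on the single time level selected by tB and tT. *)
Local Notation K := (1%:M *t Kx : 'M[R]_(1 * (3 * nx.+1))).
Local Notation tB := (@tB_glob R nt nx).
Local Notation tT := (@tT_glob R nt nx).

Lemma Kx_pos : pos_diag_mx Kx.
Proof. exact: pos_diag_mx_tens (pos_diag_mx1 _ _) Hx_pos. Qed.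

Lemma P_posdef : posdef P.
Proof. exact/pos_diag_mx_posdef/pos_diag_mx_tens/Kx_pos. Qed.

Lemma K_posdef : posdef K.
Proof. exact/pos_diag_mx_posdef/pos_diag_mx_tens/Kx_pos/pos_diag_mx1. Qed.

Lemma K_sym : K^T = K.
Proof. exact/pos_diag_mx_sym/pos_diag_mx_tens/Kx_pos/pos_diag_mx1. Qed.

Lemma boundary_sandwich (t : 'cV[R]_nt.+1) :
  (t *t (1%:M : 'M_(3 * nx.+1))) *m K *m (t *t 1%:M)^T = (t *m t^T) *t Kx.
Proof. by rewrite trmx_tens trmx1 !tensmx_mul mulmx1 mul1mx mulmx1. Qed.

Lemma MT_sandwich : @MT R nt nx Hx = tT *m K *m tT^T.
Proof. by rewrite boundary_sandwich. Qed.

Lemma MB_sandwich : @MB R nt nx Hx = tB *m K *m tB^T.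
Proof. by rewrite boundary_sandwich. Qed.

Lemma Dt_glob_SBP :
  P *m Dt_glob Ht Qt + (P *m Dt_glob Ht Qt)^T = tT *m K *m tT^T - tB *m K *m tB^T.
Proof.
have PDt : P *m Dt_glob Ht Qt = Qt *t Kx.
  by rewrite tensmx_mul mulmxA mulmxV ?pos_diag_mx_unit // mul1mx mulmx1.
rewrite PDt trmx_tens (pos_diag_mx_sym Kx_pos) -tensmxDl Qt_E /Ebar tensmxBl.
by rewrite !boundary_sandwich.
Qed.

Lemma Dx_glob_skew : (P *m Dx_glob Hx Qx)^T = - (P *m Dx_glob Hx Qx).
Proof.
have PDx : P *m Dx_glob Hx Qx = Ht *t QGx Qx.
  rewrite tensmx_mul mulmx1 mulmxA tensmx_mul mul1mx mulmxV ?pos_diag_mx_unit //.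
  by rewrite tensmx11 mul1mx.
by rewrite PDx trmx_tens (pos_diag_mx_sym Ht_pos) (QGx_skew Qx_E) tensmxNr.
Qed.

Lemma Ht_glob_SAT : P *m invmx (Ht_glob Ht) *m tB = tB *m K.
Proof.
have Ht_glob_unit : @Ht_glob R nt nx Ht \in unitmx.
  by apply: tensmx_unit; rewrite ?unitmx1 ?pos_diag_mx_unit ?muln_eq0.
have -> : P = (1%:M *t Kx) *m @Ht_glob R nt nx Ht by rewrite tensmx_mul mul1mx mulmx1.
by rewrite -[(1%:M *t Kx) *m _ *m _]mulmxA mulmxV // mulmx1 !tensmx_mul !mul1mx !mulmx1.
Qed.

End Global_operators.

Theorem theorem3p11 (R : realFieldType) (nx nt nv px pt : nat)
  (xn : 'cV[R]_nx.+1) (Hx Qx : 'M[R]_nx.+1)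
  (tn : 'cV[R]_nt.+1) (Ht Qt : 'M[R]_nt.+1)
  (v w : 'I_nv -> R) (eps sigs siga : R)
  (rho0 : 'cV[R]_(nt.+1 * (3 * nx.+1))) (g0 : 'I_nv -> 'cV[R]_(nt.+1 * (3 * nx.+1)))
  (rhoI rhoII : 'cV[R]_(nt.+1 * (3 * nx.+1)))
  (gI gII : 'I_nv -> 'cV[R]_(nt.+1 * (3 * nx.+1))) :
  is_SBP px xn Hx Qx ->
  is_SBP pt tn Ht Qt ->
  (forall k, 0 < w k) ->
  \sum_(k < nv) w k = 1 ->
  \sum_(k < nv) w k * v k = 0 ->
  0 < eps -> 0 < sigs -> 0 <= siga ->
  vavg w g0 = 0 ->
  let Dx := @Dx_glob R nt nx Hx Qx in
  let Dt := @Dt_glob R nt nx Ht Qt in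
  let Htinv := invmx (@Ht_glob R nt nx Ht) in
  let tB := @tB_glob R nt nx in
  let tT := @tT_glob R nt nx in
  (* slab I *)
  Dt *m rhoI + Dx *m vavg w (fun k => v k *: gI k)
    = - (siga *: rhoI) - Htinv *m tB *m (tB^T *m (rhoI - rho0)) ->
  (forall k, Dt *m gI k + (v k / eps) *: (Dx *m gI k)
       - eps^-1 *: vavg w (fun j => v j *: (Dx *m gI j))
       + (v k / eps ^+ 2) *: (Dx *m rhoI)
     = - ((sigs / eps ^+ 2 + siga) *: gI k)
       - Htinv *m tB *m (tB^T *m (gI k - g0 k))) ->
  (* slab II *)
  Dt *m rhoII + Dx *m vavg w (fun k => v k *: gII k)
    = - (siga *: rhoII) - Htinv *m tB *m (tB^T *m rhoII - tT^T *m rhoI) ->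
  (forall k, Dt *m gII k + (v k / eps) *: (Dx *m gII k)
       - eps^-1 *: vavg w (fun j => v j *: (Dx *m gII j))
       + (v k / eps ^+ 2) *: (Dx *m rhoII)
     = - ((sigs / eps ^+ 2 + siga) *: gII k)
       - Htinv *m tB *m (tB^T *m gII k - tT^T *m gI k)) ->
  2^-1 * qform (@MT R nt nx Hx) rhoII
    + eps ^+ 2 / 2 * savg w (fun k => qform (@MT R nt nx Hx) (gII k))
  <= 2^-1 * qform (@MB R nt nx Hx) rho0
    + eps ^+ 2 / 2 * savg w (fun k => qform (@MB R nt nx Hx) (g0 k)).
Proof.
move=> SBPx SBPt w_gt0 w_sum1 wv_sum0 eps_gt0 sigs_gt0 siga_ge0 g0_avg0.
move=> Dx Dt Htinv tB tT EI_rho EI_g EII_rho EII_g.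
have [Hx_pos Ht_pos] := (SBP_pos_diag_mx SBPx, SBP_pos_diag_mx SBPt).
have slab := slab_energy (P_posdef Ht_pos Hx_pos) (K_posdef Hx_pos) (K_sym Hx_pos)
  (Dt_glob_SBP Ht_pos Hx_pos (SBP_Q_boundary SBPt))
  (Dx_glob_skew Ht_pos Hx_pos (SBP_Q_boundary SBPx))
  (Ht_glob_SAT Hx Ht_pos) w_gt0 w_sum1 wv_sum0 eps_gt0 sigs_gt0 siga_ge0.
rewrite mulmxBr in EI_rho; setoid_rewrite mulmxBr in EI_g.
have tB_g0_avg0 : vavg w (fun k => tB^T *m g0 k) = 0 by rewrite vavg_mulmx g0_avg0 mulmx0.
have [gI_avg0 energyI] := slab _ _ _ _ EI_rho EI_g tB_g0_avg0.
have tT_gI_avg0 : vavg w (fun k => tT^T *m gI k) = 0 by rewrite vavg_mulmx gI_avg0 mulmx0.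
have [_ energyII] := slab _ _ _ _ EII_rho EII_g tT_gI_avg0.
rewrite MT_sandwich MB_sandwich !qform_sandwich.
under eq_savg do rewrite qform_sandwich.
under [X in _ <= _ + _ * X]eq_savg do rewrite qform_sandwich.
exact: le_trans energyII energyI.
Qed.
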